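(* Let $\Gamma=\langle V,(w_u)_{u\in V},\alpha,1\rangle$ be a celebrity game with critical distance $\beta=1$. Then $PoA(\Gamma)\le 2$. Moreover, for any two Nash equilibria $S,S'$ of $\Gamma$, $C(S)\le 2\,C(S')$.
   Context: A celebrity game $\Gamma=\langle V,(w_u)_{u\in V},\alpha,\beta\rangle$ consists of a set of players $V=\{1,\dots,n\}$, celebrity weights $w_u>0$, a link cost $\alpha>0$ and a critical distance $\beta$ with $1\le\beta\le n-1$. A strategy of player $u$ is a set $S_u\subseteq V\setminus\{u\}$; a strategy profile is $S=(S_1,\dots,S_n)$; its outcome graph $G[S]$ is the undirected graph on $V$ with edge set $\{\{u,v\}: u\in S_v\text{ or }v\in S_u\}$. With $d_G$ the graph distance (infinite between different connected components), the cost of player $u$ is $c_u(S)=\alpha|S_u|+\sum_{v:\,d_{G[S]}(u,v)>\beta}w_v$ and the social cost is $C(S)=\sum_{u\in V}c_u(S)$. $S$ is a Nash equilibrium if no player can strictly decrease its cost by changing only its own strategy. $\mathrm{opt}(\Gamma)=\min_S C(S)$ and $PoA(\Gamma)=\max_{S\text{ Nash equilibrium}}C(S)/\mathrm{opt}(\Gamma)$. *)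

From mathcomp Require Import all_boot all_order all_algebra.
Set Implicit Arguments. Unset Strict Implicit. Unset Printing Implicit Defensive.
Import Order.TTheory GRing.Theory Num.Theory.
Local Open Scope ring_scope.

Definition profile (n : nat) := {ffun 'I_n -> {set 'I_n}}.

Definition valid_profile n (S : profile n) : bool := [forall u, u \notin S u].

Definition adj n (S : profile n) (u v : 'I_n) : bool := (u \in S v) || (v \in S u).

(* within S k u v  <=>  d_{G[S]}(u,v) <= k. *)
Fixpoint within n (S : profile n) (k : nat) (u v : 'I_n) : bool :=
  match k with
  | 0 => u == v
  | k'.+1 => within S k' u v || [exists x, within S k' u x && adj S x v]
  end.

Definition player_cost (R : realFieldType) n (w : 'I_n -> R) (alpha : R)
  (beta : nat) (S : profile n) (u : 'I_n) : R :=
  alpha * #|S u|%:R + \sum_(v | ~~ within S beta u v) w v.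

Definition social_cost (R : realFieldType) n (w : 'I_n -> R) (alpha : R)
  (beta : nat) (S : profile n) : R :=
  \sum_(u : 'I_n) player_cost w alpha beta S u.

Definition deviate n (S : profile n) (u : 'I_n) (s : {set 'I_n}) : profile n :=
  [ffun v => if v == u then s else S v].

Definition is_NE (R : realFieldType) n (w : 'I_n -> R) (alpha : R)
  (beta : nat) (S : profile n) : Prop :=
  valid_profile S /\
  forall (u : 'I_n) (s : {set 'I_n}), u \notin s ->
    player_cost w alpha beta S u <= player_cost w alpha beta (deviate S u s) u.

(* The empty profile (valid), used as the seed of the minimum. *)
Definition empty_profile n : profile n := [ffun => set0].

Definition opt (R : realFieldType) n (w : 'I_n -> R) (alpha : R) (beta : nat) : R :=
  \big[Num.min/social_cost w alpha beta (empty_profile n)]_(S : profile n | valid_profile S)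
     social_cost w alpha beta S.

From mathcomp Require Import all_boot all_order all_algebra.
From mathcomp Require Import lra.
Set Implicit Arguments. Unset Strict Implicit. Unset Printing Implicit Defensive.
Import Order.TTheory GRing.Theory Num.Theory.
Local Open Scope ring_scope.

(** For critical distance 1 the social cost splits over unordered pairs
    {u, v}: the pair pays alpha per purchased link between u and v, and
    w u + w v if they are not adjacent.  Every profile therefore pays at
    least m(u, v) = min(alpha, w u + w v) on each pair.  In a Nash
    equilibrium no link is bought twice, a bought link v in S u satisfies
    alpha <= w v, and a missing link satisfies w u, w v <= alpha; hence an
    equilibrium pays at most 2 m(u, v) on each pair.  So every equilibrium
    costs at most sum m, while every profile costs at least (sum m) / 2. *)

Section CelebrityGameDistanceOne.
Variables (R : realFieldType) (n : nat) (w : 'I_n -> R) (alpha : R).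
Implicit Types (S : profile n) (u v : 'I_n) (s : {set 'I_n}).

Local Notation cost := (player_cost w alpha 1).
Local Notation NE := (is_NE w alpha 1).

Lemma within1E S u v : within S 1 u v = (u == v) || adj S u v.
Proof.
rewrite /=; congr (_ || _); apply/existsP/idP => [[x /andP[/eqP-> //]]|uv].
by exists u; rewrite eqxx.
Qed.

Definition cost_toward S u v :=
  (if v \in S u then alpha else 0) + (if (u == v) || adj S u v then 0 else w v).

Lemma player_cost1E S u : cost S u = \sum_v cost_toward S u v.
Proof.
rewrite /player_cost /cost_toward big_split /=; congr (_ + _).
  by rewrite -big_mkcond /= sumr_const mulr_natr.
rewrite big_mkcond; apply: eq_bigr => v _.
by have /= -> := within1E S u v; case: (_ || _).
Qed.

Definition deviation_cost S u s v :=
  (if v \in s then alpha else 0) +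
  (if (u == v) || (u \in S v) || (v \in s) then 0 else w v).

Lemma player_cost_deviate S u s :
  cost (deviate S u s) u = \sum_v deviation_cost S u s v.
Proof.
rewrite player_cost1E; apply: eq_bigr => v _.
rewrite /cost_toward /deviation_cost /adj !ffunE eqxx.
by case: (eqVneq u v) => [->|_] //; rewrite -orbA.
Qed.

Lemma player_cost_stay S u : cost S u = \sum_v deviation_cost S u (S u) v.
Proof.
rewrite player_cost1E; apply: eq_bigr => v _.
by rewrite /cost_toward /deviation_cost /adj; case: (u == v).
Qed.

Lemma NE_deviation_cost_le S u s v0 : NE S -> u \notin s ->
  {in predC1 v0, s =i S u} ->
  deviation_cost S u (S u) v0 <= deviation_cost S u s v0.
Proof.
move=> [_ NE_S] us s_off_v0; have := NE_S u s us.
rewrite player_cost_stay player_cost_deviate (bigD1 v0) //=.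
rewrite [X in _ <= X](bigD1 v0) //= (eq_bigr (deviation_cost S u s)).
  by rewrite lerD2r.
by move=> v v_neq; rewrite /deviation_cost s_off_v0.
Qed.

Lemma NE_notin_self S u : NE S -> u \notin S u.
Proof. by case=> /forallP. Qed.

Hypothesis alpha_gt0 : 0 < alpha.

Lemma NE_bought_link S u v : NE S -> v \in S u -> u \notin S v /\ alpha <= w v.
Proof.
move=> NE_S vSu; have uSu := NE_notin_self u NE_S.
have uv : u != v by apply: contraTneq vSu => <-.
have := @NE_deviation_cost_le S u (S u :\ v) v NE_S.
rewrite in_setD1 negb_and uSu orbT => /(_ isT).
have off_v : {in predC1 v, S u :\ v =i S u} by move=> x; rewrite !inE => ->.
move=> /(_ off_v); rewrite /deviation_cost vSu setD11 (negbTE uv) /= add0r.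
by case: (u \in S v) => /=; rewrite ?addr0 // => /(lt_le_trans alpha_gt0); rewrite ltxx.
Qed.

Lemma NE_missing_link S u v : NE S -> u != v -> v \notin S u -> u \notin S v ->
  w v <= alpha.
Proof.
move=> NE_S uv vSu uSv; have uSu := NE_notin_self u NE_S.
have := @NE_deviation_cost_le S u (v |: S u) v NE_S.
rewrite in_setU1 negb_or uv uSu => /(_ isT).
have off_v : {in predC1 v, v |: S u =i S u} by move=> x; rewrite !inE => /negbTE->.
move=> /(_ off_v).
by rewrite /deviation_cost (negbTE vSu) setU11 (negbTE uv) (negbTE uSv) /= add0r !addr0.
Qed.

Hypothesis w_gt0 : forall u, 0 < w u.

Definition pair_cost S u v := cost_toward S u v + cost_toward S v u.

Definition pair_min_cost u v := if u == v then 0 else Num.min alpha (w u + w v).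

Lemma pair_min_cost_ge0 u v : 0 <= pair_min_cost u v.
Proof.
rewrite /pair_min_cost; case: ifP => // _.
by rewrite le_min (ltW alpha_gt0) addr_ge0 // ltW.
Qed.

Lemma pair_min_cost_le S u v : pair_min_cost u v <= pair_cost S u v.
Proof.
have [a0 wu wv] := And3 alpha_gt0 (w_gt0 u) (w_gt0 v).
rewrite /pair_min_cost /pair_cost /cost_toward /adj.
case: (eqVneq u v) => [->|uv] /=.
  by case: ifP; rewrite ?addr0 ?add0r // addr_ge0 // ltW.
by case: (v \in S u); case: (u \in S v);
  rewrite /= ge_min; apply/orP; first [left; lra | right; lra].
Qed.

Lemma NE_pair_cost_le S u v : NE S -> pair_cost S u v <= 2 * pair_min_cost u v.
Proof.
move=> NE_S; have [a0 wu wv] := And3 alpha_gt0 (w_gt0 u) (w_gt0 v).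
rewrite /pair_min_cost /pair_cost /cost_toward /adj.
case: (eqVneq u v) => [->|uv] /=.
  by rewrite (negbTE (NE_notin_self v NE_S)) !addr0 mulr0.
rewrite minr_pMr // le_min.
case vSu: (v \in S u); case uSv: (u \in S v) => /=.
- by have [] := NE_bought_link NE_S vSu; rewrite uSv.
- have [_ ?] := NE_bought_link NE_S vSu; apply/andP; split; lra.
- have [_ ?] := NE_bought_link NE_S uSv; apply/andP; split; lra.
- have vu : v != u by rewrite eq_sym.
  have := NE_missing_link NE_S uv (negbT vSu) (negbT uSv).
  have := NE_missing_link NE_S vu (negbT uSv) (negbT vSu).
  by move=> ? ?; apply/andP; split; lra.
Qed.

Local Notation social := (social_cost w alpha 1).

Lemma social_cost_pairs S : 2 * social S = \sum_u \sum_v pair_cost S u v.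
Proof.
under [RHS]eq_bigr do rewrite big_split.
rewrite big_split /= [X in _ + X]exchange_big /= -mulr2n mulr_natl.
by congr (_ *+ 2); apply: eq_bigr => u _; rewrite player_cost1E.
Qed.

Definition pair_min_total := \sum_u \sum_v pair_min_cost u v.

Lemma pair_min_total_le S : pair_min_total <= 2 * social S.
Proof.
by rewrite social_cost_pairs; apply: ler_sum => u _; apply: ler_sum => v _;
  apply: pair_min_cost_le.
Qed.

Lemma NE_social_cost_le S : NE S -> social S <= pair_min_total.
Proof.
move=> NE_S; rewrite -(ler_pM2l (ltr0Sn R 1)) social_cost_pairs mulr_sumr.
apply: ler_sum => u _; rewrite mulr_sumr; apply: ler_sum => v _.
exact: NE_pair_cost_le.
Qed.

Lemma pair_min_total_gt0 : (2 <= n)%N -> 0 < pair_min_total.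
Proof.
move=> n_ge2; pose a : 'I_n := Ordinal (ltnW n_ge2); pose b : 'I_n := Ordinal n_ge2.
have ab_gt0 : 0 < pair_min_cost a b.
  by rewrite /pair_min_cost /= lt_min alpha_gt0 addr_gt0.
have row_ge0 u : 0 <= \sum_v pair_min_cost u v.
  by apply: sumr_ge0 => v _; apply: pair_min_cost_ge0.
rewrite /pair_min_total (bigD1 a) //= (bigD1 b) //= -addrA ltr_pwDl //.
by apply: addr_ge0; apply: sumr_ge0 => i _; [apply: pair_min_cost_ge0|apply: row_ge0].
Qed.

Lemma pair_min_total_le_opt : pair_min_total <= 2 * opt w alpha 1.
Proof.
rewrite -ler_pdivrMl ?ltr0Sn //; apply: le_bigmin => [|S _];
  by rewrite ler_pdivrMl ?ltr0Sn // pair_min_total_le.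
Qed.

End CelebrityGameDistanceOne.

Theorem theorem5 (R : realFieldType) (n : nat) (w : 'I_n -> R) (alpha : R)
  (hn : (2 <= n)%N) (hw : forall u, 0 < w u) (halpha : 0 < alpha) :
  (forall S : profile n, is_NE w alpha 1 S ->
      social_cost w alpha 1 S / opt w alpha 1 <= 2) /\
  (forall S S' : profile n, is_NE w alpha 1 S -> is_NE w alpha 1 S' ->
      social_cost w alpha 1 S <= 2 * social_cost w alpha 1 S').
Proof.
have total_gt0 := pair_min_total_gt0 halpha hw hn.
have total_le_opt := pair_min_total_le_opt halpha hw.
have NE_le_total := NE_social_cost_le halpha hw.
split=> [S NE_S | S S' NE_S _].
  have opt_gt0 : 0 < opt w alpha 1.
    by rewrite -(pmulr_rgt0 _ (ltr0Sn R 1)) (lt_le_trans total_gt0 total_le_opt).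
  rewrite ler_pdivrMr //.
  exact: le_trans (NE_le_total S NE_S) total_le_opt.
exact: le_trans (NE_le_total S NE_S) (pair_min_total_le halpha hw S').
Qed.
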